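(* Let $X$ be a finite set, $k$ an integer with $1\le k\le|X|-1$, $\mathfrak{C}$ a nonempty symmetric family of choice functions for $\binom{X}{k}$, and $\mathcal{F}$ the set of (not necessarily simple) averaging functions for $\mathfrak{C}$, with $r(\mathcal{F})=2$. Assume that for every $Y\in\binom{X}{k}$ and all $a_1\ne a_2$ in $Y$ there is $f\in\mathcal{F}_{[2]}$ with $f_Y(a_1,a_2)=a_2$ and $f_Z(b_1,b_2)=b_1$ for all $Z\in\binom{X}{k}$ with $Z\ne Y$ and all $b_1,b_2\in Z$. Then $\mathfrak{C}$ is full, i.e. every choice function for $\binom{X}{k}$ belongs to $\mathfrak{C}$.
   Context: $\binom{X}{k}=\{Y\subseteq X:|Y|=k\}$; choice functions satisfy $c(Y)\in Y$. Symmetric: for every permutation $\pi$ of $X$ and $c\in\mathfrak{C}$, $(\pi*c)(Y)=\pi^{-1}(c(\pi(Y)))$ is in $\mathfrak{C}$. $\mathcal{F}_{[r]}$ is the set of families $f=\langle f_Y:Y\in\binom{X}{k}\rangle$ with $f_Y:Y^r\to Y$, $f_Y(x_1,\dots,x_r)\in\{x_1,\dots,x_r\}$, such that for all $c_1,\dots,c_r\in\mathfrak{C}$, $Y\mapsto f_Y(c_1(Y),\dots,c_r(Y))$ is in $\mathfrak{C}$; $\mathcal{F}=\bigcup_r\mathcal{F}_{[r]}$. $f\in\mathcal{F}_{[r]}$ is a monarchy if for some $t$, $f_Y(\bar x)=x_t$ for all $Y$ and $\bar x\in Y^r$. $r(\mathcal{F})=\min\{r\ge2:\text{some } f\in\mathcal{F}_{[r]}\text{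 is not a monarchy}\}$. Standing assumption: every simple $f\in\mathcal{F}$ (one with $f_Y$ the restriction of a single function independent of $Y$) is a monarchy. *)

From mathcomp Require Import all_boot all_order all_fingroup.
Set Implicit Arguments. Unset Strict Implicit. Unset Printing Implicit Defensive.

Notation ksub X k := {Y : {set X} | #|Y| == k}.

Section Defs.
Variables (X : finType) (k : nat).

Definition is_choice (c : {ffun ksub X k -> X}) : Prop :=
  forall Y : ksub X k, c Y \in val Y.

Lemma kact_proof (p : {perm X}) (Y : ksub X k) : #|p @: val Y| == k.
Proof. by rewrite card_imset; [exact: (valP Y) | exact: perm_inj]. Qed.

Definition kact (p : {perm X}) (Y : ksub X k) : ksub X k :=
  exist (fun Z : {set X} => #|Z| == k) (p @: val Y) (kact_proof p Y).

Definition perm_choice (p : {perm X}) (c : {ffun ksub X k -> X}) :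
  {ffun ksub X k -> X} := [ffun Y => (p^-1)%g (c (kact p Y))].

Definition symmetric_family (C : {set {ffun ksub X k -> X}}) : Prop :=
  forall (p : {perm X}) c, c \in C -> perm_choice p c \in C.

(* A family f = <f_Y> with f_Y : Y^r -> Y; only the values on Y^r matter. *)
Definition in_power (r : nat) (Y : ksub X k) (x : r.-tuple X) : bool :=
  all (fun a => a \in val Y) x.

Definition averaging (C : {set {ffun ksub X k -> X}}) (r : nat)
    (f : ksub X k -> r.-tuple X -> X) : Prop :=
  (forall Y x, in_power Y x -> f Y x \in (x : seq X)) /\
  (forall cs : r.-tuple {ffun ksub X k -> X},
     (forall i : 'I_r, tnth cs i \in C) ->
     [ffun Y => f Y [tuple tnth cs i Y | i < r]] \in C).

Definition monarchy (r : nat) (f : ksub X k -> r.-tuple X -> X) : Prop :=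
  exists t : 'I_r, forall Y x, in_power Y x -> f Y x = tnth x t.

Definition simple (r : nat) (f : ksub X k -> r.-tuple X -> X) : Prop :=
  exists g : r.-tuple X -> X, forall Y x, in_power Y x -> f Y x = g x.

Definition rF_is (C : {set {ffun ksub X k -> X}}) (r : nat) : Prop :=
  [/\ 2 <= r,
      exists f : ksub X k -> r.-tuple X -> X, averaging C f /\ ~ monarchy f &
      forall r', 2 <= r' < r -> forall f : ksub X k -> r'.-tuple X -> X,
        averaging C f -> monarchy f].

Definition full (C : {set {ffun ksub X k -> X}}) : Prop :=
  forall c, is_choice c -> c \in C.

End Defs.

(* Starting from any member of C, patch it one k-subset at a time.  To move
   the value at Y to a target a, take c' in C with c'(Y) = a (conjugating any
   member of C by the transposition of a and its value at Y, which fixes Y)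
   and average c with c' by the separating f in F_[2] for Y and (c(Y), a):
   it returns c'(Y) = a at Y and the value of c elsewhere. *)
From mathcomp Require Import all_boot all_order all_fingroup.

Set Implicit Arguments.
Unset Strict Implicit.
Unset Printing Implicit Defensive.

Section Patching.
Variables (X : finType) (k : nat) (C : {set {ffun ksub X k -> X}}).
Hypothesis choiceC : forall c, c \in C -> is_choice c.
Hypothesis symC : symmetric_family C.

Lemma kact_tperm_id (Y : ksub X k) (a b : X) :
  a \in val Y -> b \in val Y -> kact (tperm a b) Y = Y.
Proof.
move=> aY bY; apply: val_inj; apply: im_perm_on.
apply: subset_trans (tperm_on a b) _.
by apply/subsetP => z; rewrite !inE => /orP[] /eqP ->.
Qed.

Lemma symmetric_family_attains (c0 : {ffun ksub X k -> X}) (Y : ksub X k)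
    (a : X) :
  c0 \in C -> a \in val Y -> exists2 c, c \in C & c Y = a.
Proof.
move=> c0C aY; exists (perm_choice (tperm a (c0 Y)) c0); first exact: symC.
by rewrite ffunE kact_tperm_id ?choiceC // tpermV tpermR.
Qed.

Lemma averaging2_mem (f : ksub X k -> 2.-tuple X -> X)
    (c1 c2 : {ffun ksub X k -> X}) :
  averaging C f -> c1 \in C -> c2 \in C ->
  [ffun Y => f Y [tuple c1 Y; c2 Y]] \in C.
Proof.
case=> _ closedf c1C c2C.
have -> : [ffun Y => f Y [tuple c1 Y; c2 Y]] =
          [ffun Y => f Y [tuple tnth [tuple c1; c2] i Y | i < 2]].
  apply/ffunP => Y; rewrite !ffunE; congr (f Y _).
  by apply: eq_from_tnth => -[[|[|]] ?] //; rewrite tnth_mktuple.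
by apply: closedf => -[[|[|]] ?].
Qed.

Hypothesis sepC : forall (Y : ksub X k) (a1 a2 : X),
  a1 \in val Y -> a2 \in val Y -> a1 != a2 ->
  exists f : ksub X k -> 2.-tuple X -> X,
    [/\ averaging C f,
        f Y [tuple a1; a2] = a2 &
        forall Z : ksub X k, Z != Y -> forall b1 b2 : X,
          b1 \in val Z -> b2 \in val Z -> f Z [tuple b1; b2] = b1].

Lemma patch_at (c : {ffun ksub X k -> X}) (Y : ksub X k) (a : X) :
  c \in C -> a \in val Y ->
  exists2 c', c' \in C & c' Y = a /\ forall Z, Z != Y -> c' Z = c Z.
Proof.
move=> cC aY; have [cY | neq] := eqVneq (c Y) a; first by exists c.
have [c2 c2C c2Y] := symmetric_family_attains cC aY.
have [f [avf fY fZ]] := sepC (choiceC cC Y) aY neq.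
exists [ffun Z => f Z [tuple c Z; c2 Z]]; first exact: averaging2_mem.
split=> [|Z neqZ]; first by rewrite ffunE c2Y.
by rewrite ffunE fZ ?choiceC.
Qed.

Lemma patch_on_seq (c0 cs : {ffun ksub X k -> X}) (s : seq (ksub X k)) :
  c0 \in C -> is_choice cs ->
  exists2 c, c \in C & {in s, forall Y, c Y = cs Y}.
Proof.
move=> c0C csc; elim: s => [|Y s [c cC eq_s]]; first by exists c0.
have [c' c'C [c'Y c'Z]] := patch_at cC (csc Y).
exists c' => // Z; rewrite inE; have [-> // | neqZ /= Zs] := eqVneq Z Y.
by rewrite c'Z ?eq_s.
Qed.

End Patching.

Theorem claim14p20 (X : finType) (k : nat)
  (C : {set {ffun ksub X k -> X}})
  (hk : 1 <= k <= #|X| - 1)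
  (Hchoice : forall c, c \in C -> is_choice c)
  (Hne : C != set0)
  (Hsym : symmetric_family C)
  (Hstanding : forall (r : nat) (f : ksub X k -> r.-tuple X -> X),
      averaging C f -> simple f -> monarchy f)
  (Hr : rF_is C 2)
  (Hsep : forall (Y : ksub X k) (a1 a2 : X),
      a1 \in val Y -> a2 \in val Y -> a1 != a2 ->
      exists f : ksub X k -> 2.-tuple X -> X,
        [/\ averaging C f,
            f Y [tuple a1; a2] = a2 &
            forall Z : ksub X k, Z != Y -> forall b1 b2 : X,
              b1 \in val Z -> b2 \in val Z -> f Z [tuple b1; b2] = b1]) :
  full C.
Proof.
move=> cs csc; have [c0 c0C] := set0Pn _ Hne.
have [c cC eqc] := patch_on_seq Hchoice Hsym Hsep (enum [set: ksub X k]) c0C csc.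
suff -> : cs = c by [].
by apply/ffunP => Y; rewrite eqc // mem_enum inE.
Qed.
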